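(* Let $r\ge 2$ and let $\mathcal{D}$ be the infinite lattice path defined in the context, with vertices $w_0=(0,0),w_1,w_2,\dots$ in order along the path, and for each $j\ge 0$ let $v_j$ be the leftmost vertex of $\mathcal{D}$ at height $j$ (the $j$-th northwest corner). Define $\mu$ on the vertices of $\mathcal{D}$ by $\mu(w_i)=v_i$. If $w_i$ has coordinates $(x,y)$, then $$\mu(w_i)=\big((r-1)x+(r-2)y,\;x+y\big).$$
   Context: Fix an integer $r\ge 2$. Define $c_1=0$, $c_2=1$, $c_n=rc_{n-1}-c_{n-2}$ for $n\ge 3$. For nonnegative integers $a,b$, the maximal Dyck path $\mathcal{P}(a,b)$ is the lattice path from $(0,0)$ to $(a,b)$ using unit north and east steps that never passes strictly above the line segment from $(0,0)$ to $(a,b)$ and is closest to that segment (i.e. it is the maximal such path in the partial order comparing heights at all vertices). For $n\ge 3$ let $\mathcal{D}_n=\mathcal{P}(c_{n-1}-c_{n-2},c_{n-2})$. Each $\mathcal{D}_{n}$ is a prefix of $\mathcal{D}_{n+1}$, and $\mathcal{D}$ denotes the infinite path $\bigcup_{n\ge 3}\mathcal{D}_n$; each $\mathcal{D}_n$ is identified with the prefix of $\mathcal{D}$ of the same length. The $i$-th vertex $w_i$ of $\mathcal{D}$ is the endpoint of its first $i$ steps. *)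

From mathcomp Require Import all_boot.
Set Implicit Arguments. Unset Strict Implicit. Unset Printing Implicit Defensive.

(* c_1 = 0, c_2 = 1, c_n = r c_{n-1} - c_{n-2} (n >= 3); c_0 is an unused dummy.
   For r >= 2 the sequence is nondecreasing, so truncated subtraction is exact. *)
Fixpoint cseq (r n : nat) : nat :=
  match n with
  | 0 => 0
  | 1 => 0
  | 2 => 1
  | S ((S m) as m1) => r * cseq r m1 - cseq r m
  end.

(* Lattice paths are sequences of unit steps: true = north, false = east.
   The vertex after the first i steps of p has coordinates (px p i, py p i). *)
Definition px (p : seq bool) (i : nat) : nat := count negb (take i p).
Definition py (p : seq bool) (i : nat) : nat := count id (take i p).

Definition below_path (a b : nat) (p : seq bool) : Prop :=
  [/\ size p = a + b, count id p = b &
      forall i, i <= a + b -> py p i * a <= px p i * b].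

Definition max_dyck (a b : nat) (p : seq bool) : Prop :=
  below_path a b p /\
  forall q, below_path a b q -> forall i, i <= a + b -> py q i <= py p i.

Definition prefix (D : nat -> bool) (n : nat) : seq bool := [seq D k | k <- iota 0 n].

Definition wx (D : nat -> bool) (i : nat) : nat := px (prefix D i) i.
Definition wy (D : nat -> bool) (i : nat) : nat := py (prefix D i) i.

(* D is the infinite path \bigcup_{n>=3} D_n: for every n >= 3 its prefix of
   length c_{n-1} (= (c_{n-1}-c_{n-2}) + c_{n-2}) is P(c_{n-1}-c_{n-2}, c_{n-2}). *)
Definition is_D (r : nat) (D : nat -> bool) : Prop :=
  forall n, 3 <= n ->
    max_dyck (cseq r n.-1 - cseq r n.-2) (cseq r n.-2) (prefix D (cseq r n.-1)).

Definition leftmost_at (D : nat -> bool) (X Y : nat) : Prop :=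
  (exists k, wx D k = X /\ wy D k = Y) /\
  (forall k, wy D k = Y -> X <= wx D k).

From Pilot Require Import Defs.
From mathcomp Require Import all_boot.
From mathcomp Require Import zify.

Set Implicit Arguments.
Unset Strict Implicit.
Unset Printing Implicit Defensive.

(* The maximal Dyck path P(a,b) has height floor(k b / (a + b)) after k steps,
   so along D the height of w_k is floor(k c_{n-1} / c_n) for k <= c_n.  Take
   w_i = (x, y), i = x + y, and put a = c_{i+1}, b = c_{i+2}, c = c_{i+3}; then
   y = floor(i a / b), and since c + a = r b the first index K at which D
   reaches height i, namely ceil(i c / b), equals r i - y.  The leftmost vertex
   at height i is w_K = (K - i, i) = ((r-1) x + (r-2) y, x + y). *)

Lemma px_add_py (p : seq bool) (k : nat) : k <= size p -> px p k + py p k = k.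
Proof.
move=> le_k_p; rewrite /px /py addnC.
by rewrite (count_predC id) size_take_min; lia.
Qed.

Lemma take_prefix (D : nat -> bool) (n k : nat) :
  k <= n -> take k (Defs.prefix D n) = Defs.prefix D k.
Proof. by move=> le_kn; rewrite /Defs.prefix -map_take take_iota (minn_idPl le_kn). Qed.

Lemma size_prefix (D : nat -> bool) (n : nat) : size (Defs.prefix D n) = n.
Proof. by rewrite size_map size_iota. Qed.

Lemma py_prefix (D : nat -> bool) (n k : nat) :
  k <= n -> py (Defs.prefix D n) k = wy D k.
Proof. by move=> le_kn; rewrite /wy /py !take_prefix. Qed.

Lemma px_prefix (D : nat -> bool) (n k : nat) :
  k <= n -> px (Defs.prefix D n) k = wx D k.
Proof. by move=> le_kn; rewrite /wx /px !take_prefix. Qed.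

Lemma wx_add_wy (D : nat -> bool) (k : nat) : wx D k + wy D k = k.
Proof. by rewrite px_add_py // size_prefix. Qed.

Lemma wyS (D : nat -> bool) (k : nat) : wy D k.+1 = wy D k + D k.
Proof.
rewrite /wy /py !take_oversize ?size_prefix //.
by rewrite /Defs.prefix -addn1 iotaD map_cat count_cat /= addn0.
Qed.

Lemma wy_steps (f : nat -> nat) (k : nat) :
  f 0 = 0 -> (forall j, f j <= f j.+1 <= (f j).+1) ->
  wy (fun j => f j < f j.+1) k = f k.
Proof.
move=> f0 f_step; elim: k => [|k IHk]; first by rewrite /wy /py take0.
by rewrite wyS IHk; have /andP[] := f_step k; case: ltngtP; lia.
Qed.

Lemma divnD_le (m n d : nat) : 0 < d -> n <= d -> (m + n) %/ d <= (m %/ d).+1.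
Proof.
move=> d_gt0 le_nd; apply: (@leq_trans ((m + d) %/ d)).
  by apply: leq_div2r; rewrite leq_add2l.
by rewrite divnDr ?dvdnn // divnn d_gt0 addn1.
Qed.

Section Christoffel.

Variables a b : nat.
Hypothesis ab_gt0 : 0 < a + b.

Definition christoffel_height (k : nat) : nat := k * b %/ (a + b).

Definition christoffel_step (k : nat) : bool :=
  christoffel_height k < christoffel_height k.+1.

Definition christoffel : seq bool := Defs.prefix christoffel_step (a + b).

Lemma wy_christoffel_step (k : nat) : wy christoffel_step k = christoffel_height k.
Proof.
apply: wy_steps => [|j]; first by rewrite /christoffel_height div0n.
rewrite /christoffel_height leq_div2r ?leq_mul2r ?leqnSn ?orbT //=.
by rewrite mulSn addnC divnD_le // leq_addl.
Qed.

Lemma christoffel_below : below_path a b christoffel.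
Proof.
split; first exact: size_prefix.
- rewrite -[christoffel]take_size size_prefix -/(py _ _) py_prefix //.
  by rewrite wy_christoffel_step /christoffel_height mulKn.
move=> k le_k; rewrite px_prefix // py_prefix // wy_christoffel_step.
have := wx_add_wy christoffel_step k; rewrite wy_christoffel_step.
have := leq_divM (k * b) (a + b); rewrite /christoffel_height; nia.
Qed.

Lemma max_dyck_height (p : seq bool) (k : nat) :
  max_dyck a b p -> k <= a + b -> py p k = k * b %/ (a + b).
Proof.
move=> [[size_p _ below] maximal] le_k; apply/eqP; rewrite eqn_leq.
rewrite leq_divRL //; apply/andP; split.
- have := below k le_k; have := @px_add_py p k; rewrite size_p => /(_ le_k); nia.
- rewrite -[_ %/ _]/(christoffel_height k) -wy_christoffel_step.
  rewrite -(py_prefix christoffel_step le_k).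
  exact: maximal christoffel_below k le_k.
Qed.

End Christoffel.

Section Sequence.

Variable r : nat.
Hypothesis r_ge2 : 2 <= r.

Lemma cseqSSS (m : nat) : cseq r m.+3 = r * cseq r m.+2 - cseq r m.+1.
Proof. by []. Qed.

Lemma cseq_lt (m : nat) : cseq r m.+1 < cseq r m.+2.
Proof.
elim: m => [|m IHm] //; rewrite cseqSSS.
have : 2 * cseq r m.+2 <= r * cseq r m.+2 by rewrite leq_mul2r r_ge2 orbT.
lia.
Qed.

Lemma leq_cseq (m : nat) : m <= cseq r m.+2.
Proof. by elim: m => [|m IHm] //; have := cseq_lt m.+1; lia. Qed.

Lemma cseq_rec (m : nat) : cseq r m.+3 + cseq r m.+1 = r * cseq r m.+2.
Proof.
rewrite cseqSSS subnK //.
by apply: leq_trans (ltnW (cseq_lt m)) _; rewrite leq_pmull //; lia.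
Qed.

Lemma wy_is_D (D : nat -> bool) (n k : nat) : is_D r D ->
  k <= cseq r n.+2 -> wy D k = k * cseq r n.+1 %/ cseq r n.+2.
Proof.
move=> hD le_k; have ltc := cseq_lt n.
have hDn : max_dyck (cseq r n.+2 - cseq r n.+1) (cseq r n.+1)
                    (Defs.prefix D (cseq r n.+2)) := hD n.+3 isT.
rewrite -(py_prefix D le_k) (max_dyck_height _ hDn) subnK ?(ltnW ltc) //; lia.
Qed.

End Sequence.

Lemma mulB_divn_ceil (r a b c i : nat) : 0 < b -> c + a = r * b ->
  i * c <= (r * i - i * a %/ b) * b < i * c + b.
Proof.
move=> b_gt0 e_rb; have := divn_eq (i * a) b; have := ltn_pmod (i * a) b_gt0.
have : i * c + i * a = r * i * b by rewrite -mulnDr e_rb mulnCA mulnA.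
nia.
Qed.

Lemma ceil_mul_divn (b c i K : nat) :
  b <= c -> i * c <= K * b < i * c + b -> K * b %/ c = i.
Proof.
move=> le_bc /andP[lo hi]; apply/eqP; rewrite eqn_leq -ltnS.
rewrite ltn_divLR ?leq_divRL //; lia.
Qed.

Lemma ceil_mul_divn_min (b c i K k : nat) :
  0 < c -> K * b < i * c + b -> i <= k * b %/ c -> K <= k.
Proof. by move=> c_gt0 hi; rewrite leq_divRL // => lo; nia. Qed.

Lemma mu_xE (r x y : nat) : 2 <= r ->
  (r - 1) * x + (r - 2) * y = r * (x + y) - y - (x + y).
Proof. by case: r => [|[|s]] // _; rewrite !subSS !subn0 !mulSn; lia. Qed.

Lemma leftmost_at_first (D : nat -> bool) (K Y : nat) :
  wy D K = Y -> (forall k, wy D k = Y -> K <= k) -> leftmost_at D (K - Y) Y.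
Proof.
move=> wyK K_min; split.
- by exists K; have := wx_add_wy D K; rewrite wyK; lia.
- by move=> k wyk; have := wx_add_wy D k; have := K_min k wyk; lia.
Qed.

Theorem mainTheorem1 (r : nat) (D : nat -> bool) :
  2 <= r -> is_D r D ->
  forall i : nat,
    leftmost_at D ((r - 1) * wx D i + (r - 2) * wy D i) (wx D i + wy D i).
Proof.
move=> r_ge2 hD i.
set a := cseq r i.+1; set b := cseq r i.+2; set c := cseq r i.+3.
have lt_ab : a < b := cseq_lt r_ge2 i.
have lt_bc : b < c := cseq_lt r_ge2 i.+1.
have wyi : wy D i = i * a %/ b := wy_is_D r_ge2 hD (leq_cseq r_ge2 i).
set K := r * i - wy D i.
have /andP[Klo Khi] : i * c <= K * b < i * c + b.
  by rewrite /K wyi; apply: mulB_divn_ceil; [lia | apply: cseq_rec].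
have K_min k : i <= k * b %/ c -> K <= k by apply: ceil_mul_divn_min; lia.
have le_Kc : K <= c by apply: K_min; rewrite mulKn ?leq_cseq //; lia.
have wyK : wy D K = i.
  by rewrite (wy_is_D r_ge2 hD le_Kc); apply: ceil_mul_divn; [lia | rewrite Klo Khi].
rewrite mu_xE // wx_add_wy; apply: leftmost_at_first => // k wyk.
have [le_kc | lt_ck] := leqP k c; last by lia.
by apply: K_min; rewrite -(wy_is_D r_ge2 hD le_kc) wyk.
Qed.
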